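(* Let $(X,\mu)$ be a standard Borel space with a non-atomic Borel probability measure, let $E_1,E_2,E_3$ be SP1 equivalence relations on $X$, and define $R_{ij},R_0,R_i,E_i^\circ,R_{ij}^\circ$ as in the context. Suppose $E_1\vee E_2\vee E_3$ is a triangle join over $R_{12},R_{23},R_{13}$, and let $R=R_1\vee R_2\vee R_3=R_{12}\vee R_{23}\vee R_{13}$. Then for each $i\in\{1,2,3\}$, $E_i\vee R$ is the free amalgamated join $E_i\ast_{R_i}R$ of $E_i$ and $R$ over $R_i$, and $E=E_1\vee E_2\vee E_3$ is the free amalgamated join over $R$ of the three relations $E_i\ast_{R_i}R$, $i=1,2,3$; that is, \[E=\ast_{R,\,i=1}^{3}\bigl(E_i\ast_{R_i}R\bigr).\]
   Context: An SP1 equivalence relation on a standard Borel space $X$ with a non-atomic Borel probability measure $\mu$ is an equivalence relation $R\subset X\times X$ that is Borel, has countable classes, and preserves $\mu$. $S\vee T$ (and $S_1\vee\cdots\vee S_m$) denotes the smallest SP equivalence relation containing the given relations. Free amalgamated join: let $S_1,\dots,S_m$ be SP1 relations with a common subrelation $T$. A sequence $x_1,\dots,x_n$ is reduced if each $(x_k,x_{k+1})$ belongs to some $S_a$, two successive pairs belong to distinct factors, for $n>2$ no pair belongs to $T$, and for $n=2$, $x_1\ne x_2$. $S_1\vee\cdots\vee S_m$ is the free amalgamated join of the $S_a$ over $T$ (written $\ast_T S_a$) if every reduced sequence has distinct endpoints (up to a set of measure zero). Setup: for SP1 relations $E_1,E_2,E_3$ on $X$ put $R_{ij}=R_{ji}=E_i\cap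 E_j$ ($i\ne j$), $R_0=E_1\cap E_2\cap E_3$, and for $\{i,j,k\}=\{1,2,3\}$: $R_i=R_{ij}\vee R_{ik}$, $E_i^{\circ}=E_i\setminus R_i$, $R_{ij}^{\circ}=R_{ij}\setminus R_0$. A sequence $x_1,\dots,x_n$ in $X$ is triangle-reduced if: (a) every consecutive pair lies in one of $E_1^\circ,E_2^\circ,E_3^\circ,R_{12}^\circ,R_{13}^\circ,R_{23}^\circ$ (its type); (b) if $(x_k,x_{k+1})\in E_l^\circ$ with $\{i,j,l\}=\{1,2,3\}$, each neighbouring pair (when it exists) lies in $E_i^\circ\sqcup E_j^\circ\sqcup R_{ij}^\circ$; (c) if $(x_k,x_{k+1})\in R_{ij}^\circ$ with $\{i,j,l\}=\{1,2,3\}$, each neighbouring pair (when it exists) lies in $E_l^\circ\sqcup R_{il}^\circ\sqcup R_{jl}^\circ$. It is proper of type I if its set of types contains one of $\{E_1^\circ,R_{23}^\circ\}$, $\{E_2^\circ,R_{13}^\circ\}$, $\{E_3^\circ,R_{12}^\circ\}$, $\{E_1^\circ,E_2^\circ\}$, $\{E_2^\circ,E_3^\circ\}$, $\{E_1^\circ,E_3^\circ\}$; proper of type II if its types include all of $R_{12}^\circ,R_{13}^\circ,R_{23}^\circ$ and none of the $E_i^\circ$. A loop is a sequence with $x_1=x_n$. $E_1\vee E_2\vee E_3$ is a triangle join over $R_{12},R_{23},R_{13}$ if every proper triangle-reduced sequence of type I has distinct endpoints and every proper triangle-reduced loop of type II is a concatenation of $R_i$-loops (closed subsequences whose consecutive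 pairs all lie in a single $R_i$). *)

From HB Require Import structures.
From mathcomp Require Import all_boot all_order all_algebra.
From mathcomp Require Import boolp classical_sets functions cardinality reals ereal.
From mathcomp Require Import measure lebesgue_measure probability.
Set Implicit Arguments.
Unset Strict Implicit.
Unset Printing Implicit Defensive.
Import Order.TTheory GRing.Theory Num.Theory.
Local Open Scope classical_set_scope.
Local Open Scope ring_scope.

(* Standard Borel space: Borel-isomorphic to a Borel subset of the reals
   (equivalent to the Polish-space definition by Kuratowski's theorem). *)
Definition standard_borel d (T : measurableType d) (R : realType) : Prop :=
  exists f : T -> R, measurable_fun setT f /\ injective f /\
    measurable (range f) /\ (forall A, measurable A -> measurable (f @` A)).

Definition nonatomic d (T : measurableType d) (R : realType)
  (mu : probability T R) : Prop :=
  forall A : set T, measurable A -> (0 < mu A)%E ->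
    exists B, [/\ measurable B, B `<=` A, (0 < mu B)%E & (mu B < mu A)%E].

Definition equivalence_rel T (E : set (T * T)) : Prop :=
  [/\ forall x, E (x, x),
      forall x y, E (x, y) -> E (y, x) &
      forall x y z, E (x, y) -> E (y, z) -> E (x, z)].

Definition measure_preserving_rel d (T : measurableType d) (R : realType)
  (mu : probability T R) (E : set (T * T)) : Prop :=
  forall (A : set T) (f : T -> T), measurable A -> measurable_fun A f ->
    set_inj A f -> (forall x, A x -> E (x, f x)) -> measurable (f @` A) ->
    mu (f @` A) = mu A.

Definition SP1 d (T : measurableType d) (R : realType)
  (mu : probability T R) (E : set (T * T)) : Prop :=
  [/\ equivalence_rel E, measurable E,
      (forall x, countable [set y | E (x, y)]) & measure_preserving_rel mu E].

(* smallest equivalence relation containing S (it is automatically SP when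
   S is a union of SP relations) *)
Definition gen_eq T (S : set (T * T)) : set (T * T) :=
  [set p | forall F : set (T * T), equivalence_rel F -> S `<=` F -> F p].

Definition join2 T (A B : set (T * T)) := gen_eq (A `|` B).
Definition joinI T (I : Type) (S : I -> set (T * T)) :=
  gen_eq [set p | exists i, S i p].

(* Sequences x_1..x_n are represented by x : nat -> T and n, points x 0 .. x (n-1). *)
Definition reduced T (m : nat) (S : 'I_m -> set (T * T)) (Tr : set (T * T))
  (n : nat) (x : nat -> T) : Prop :=
  (2 <= n)%N /\ exists a : nat -> 'I_m,
    [/\ forall k, (k.+1 < n)%N -> S (a k) (x k, x k.+1),
        forall k, (k.+2 < n)%N -> a k != a k.+1,
        (2 < n)%N -> forall k, (k.+1 < n)%N -> ~ Tr (x k, x k.+1) &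
        n = 2%N -> x 0%N <> x 1%N].

Definition free_amalg d (T : measurableType d) (R : realType)
  (mu : probability T R) (m : nat) (S : 'I_m -> set (T * T))
  (Tr : set (T * T)) : Prop :=
  (forall a, Tr `<=` S a) /\
  exists N : set T, [/\ measurable N, mu N = 0%E &
    forall n x, ~ N (x 0%N) -> reduced S Tr n x -> x 0%N <> x n.-1].

(* The triangle setup; indices 0,1,2 stand for 1,2,3 *)
Section Tri.
Context (T : Type) (E : 'I_3 -> set (T * T)).
Definition Rij (i j : 'I_3) := E i `&` E j.
Definition R0 := E 0 `&` E 1 `&` E 2.
Definition Ri (i : 'I_3) := gen_eq [set p | exists j, j != i /\ Rij i j p].
Definition Eo (i : 'I_3) := E i `\` Ri i.
Definition Rijo (i j : 'I_3) := Rij i j `\` R0.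
Definition Rall := gen_eq [set p | exists i j, i != j /\ Rij i j p].
End Tri.

(* TE l = E_l^o ;  TR l = R_ij^o with {i,j,l} = {1,2,3} *)
Inductive ttype := TE of 'I_3 | TR of 'I_3.

Definition typrel T (E : 'I_3 -> set (T * T)) (t : ttype) : set (T * T) :=
  match t with
  | TE l => Eo E l
  | TR l => [set p | exists i j, [/\ i != l, j != l, i != j & Rijo E i j p]]
  end.

Definition compat (t t' : ttype) : Prop :=
  match t with
  | TE l => (exists i, i != l /\ t' = TE i) \/ t' = TR l
  | TR l => t' = TE l \/ (exists i, i != l /\ t' = TR i)
  end.

Definition tri_reduced T (E : 'I_3 -> set (T * T)) (n : nat) (x : nat -> T)
  (t : nat -> ttype) : Prop :=
  [/\ (2 <= n)%N,
      forall k, (k.+1 < n)%N -> typrel E (t k) (x k, x k.+1) &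
      forall k, (k.+2 < n)%N -> compat (t k) (t k.+1) /\ compat (t k.+1) (t k)].

Definition has_type (n : nat) (t : nat -> ttype) (tt : ttype) : Prop :=
  exists k, (k.+1 < n)%N /\ t k = tt.

Definition proper_I n t : Prop :=
  (exists l, has_type n t (TE l) /\ has_type n t (TR l)) \/
  (exists i j, i != j /\ has_type n t (TE i) /\ has_type n t (TE j)).

Definition proper_II n t : Prop :=
  (forall l, has_type n t (TR l)) /\ (forall l, ~ has_type n t (TE l)).

Definition concat_Ri_loops T (E : 'I_3 -> set (T * T)) (n : nat)
  (x : nat -> T) : Prop :=
  exists (r : nat) (c : nat -> nat),
    [/\ c 0%N = 0%N, c r = n.-1,
        forall j, (j < r)%N -> (c j < c j.+1)%N &
        forall j, (j < r)%N -> x (c j) = x (c j.+1) /\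
          exists i, forall k, (c j <= k)%N -> (k < c j.+1)%N ->
            Ri E i (x k, x k.+1)].

Definition triangle_join d (T : measurableType d) (R : realType)
  (mu : probability T R) (E : 'I_3 -> set (T * T)) : Prop :=
  (exists N : set T, [/\ measurable N, mu N = 0%E &
     forall n x t, ~ N (x 0%N) -> tri_reduced E n x t -> proper_I n t ->
       x 0%N <> x n.-1]) /\
  (exists N : set T, [/\ measurable N, mu N = 0%E &
     forall n x t, ~ N (x 0%N) -> tri_reduced E n x t -> x 0%N = x n.-1 ->
       proper_II n t -> concat_Ri_loops E n x]).

From Pilot Require Import Defs.
From HB Require Import structures.
From mathcomp Require Import all_boot all_order all_algebra.
From mathcomp Require Import boolp classical_sets functions cardinality reals ereal.
From mathcomp Require Import measure lebesgue_measure probability.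
From mathcomp Require Import zify.
From Stdlib Require Import Relation_Operators Operators_Properties.
Local Open Scope classical_set_scope.
Set Implicit Arguments.
Unset Strict Implicit.
Unset Printing Implicit Defensive.

(* Every reduced word of either free product is turned, with the same
   endpoints, into a triangle-reduced sequence containing an E_l°-step; for
   the second product each letter of E_a \/ R outside R is first written as
   an alternating word of E_a°- and R-moves.  An R-segment expands into a
   chain of R_jk°-steps with distinct consecutive types, and the steps of that
   chain lying in R_l next to an E_l°-step are absorbed into it (an R_l-step
   followed by an E_l°-step is again an E_l°-step).  Reducedness guarantees
   that two E_l°-steps never become adjacent this way.  Since an E_l°-step
   has a neighbour of type E_j° (j <> l) or R_jk° ({j,k,l} = {1,2,3}), the
   sequence is proper of type I, so the type I half of the triangle-join
   hypothesis separates its endpoints off a single null set. *)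

Section Equivalences.
Variable T : Type.
Implicit Types (S F G : set (T * T)) (x y z : T).

Lemma equiv_refl F : Defs.equivalence_rel F -> forall x, F (x, x).
Proof. by case. Qed.

Lemma equiv_sym F x y : Defs.equivalence_rel F -> F (x, y) -> F (y, x).
Proof. by case=> _ + _; apply. Qed.

Lemma equiv_trans F x y z :
  Defs.equivalence_rel F -> F (x, y) -> F (y, z) -> F (x, z).
Proof. by case=> _ _; apply. Qed.

Lemma equivalenceI F G : Defs.equivalence_rel F -> Defs.equivalence_rel G ->
  Defs.equivalence_rel (F `&` G).
Proof.
move=> [rF sF tF] [rG sG tG].
by split=> [x|x y [] *|x y z [] ? ? []]; split; eauto.
Qed.

Lemma gen_eq_equivalence S : Defs.equivalence_rel (Defs.gen_eq S).
Proof.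
split=> [x F [+ _ _] _|x y Sxy F eqF sub|x y z Sxy Syz F eqF sub]; first exact.
- exact: (equiv_sym eqF (Sxy F eqF sub)).
- exact: (equiv_trans eqF (Sxy F eqF sub) (Syz F eqF sub)).
Qed.

Lemma sub_gen_eq S : S `<=` Defs.gen_eq S.
Proof. by move=> p Sp F _; apply. Qed.

Lemma gen_eq_min S F :
  Defs.equivalence_rel F -> S `<=` F -> Defs.gen_eq S `<=` F.
Proof. by move=> eqF sub p; apply. Qed.

Lemma gen_eq_refl S x : Defs.gen_eq S (x, x).
Proof. exact: equiv_refl (gen_eq_equivalence S) x. Qed.

Lemma gen_eq_sym S x y : Defs.gen_eq S (x, y) -> Defs.gen_eq S (y, x).
Proof. exact: equiv_sym (gen_eq_equivalence S). Qed.

Lemma gen_eq_trans S x y z :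
  Defs.gen_eq S (x, y) -> Defs.gen_eq S (y, z) -> Defs.gen_eq S (x, z).
Proof. exact: equiv_trans (gen_eq_equivalence S). Qed.

Lemma gen_eq_sub_gen S S' :
  S `<=` Defs.gen_eq S' -> Defs.gen_eq S `<=` Defs.gen_eq S'.
Proof. exact: gen_eq_min (gen_eq_equivalence S'). Qed.

Lemma gen_eq_rstn1 S x y :
  Defs.gen_eq S (x, y) -> clos_refl_sym_trans_n1 T (fun a b => S (a, b)) x y.
Proof.
move=> Sxy; apply: clos_rst_rstn1.
apply: (Sxy [set p | clos_refl_sym_trans T _ p.1 p.2]) => [|[a b] ?].
  split=> [a|a b|a b c] /=;
    [exact: rst_refl|exact: rst_sym|exact: rst_trans].
exact: rst_step.
Qed.

End Equivalences.

Section SeqSplit.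
Variables (U : Type) (a : pred U).

Lemma split_all_prefix (s : seq U) : exists s1 s2,
  [/\ s = s1 ++ s2, all a s1 & forall y s', s2 = y :: s' -> ~~ a y].
Proof.
elim: s => [|y s [s1 [s2 [-> all1 stop2]]]]; first by exists [::], [::].
case ay: (a y); first by exists (y :: s1), s2; rewrite /= ay.
by exists [::], (y :: s1 ++ s2); split=> // _ _ [<- _]; rewrite ay.
Qed.

Lemma split_all_suffix (s : seq U) : exists s1 s2,
  [/\ s = s1 ++ s2, all a s2 & forall s' y, s1 = rcons s' y -> ~~ a y].
Proof.
have [r1 [r2 [srev all1 stop2]]] := split_all_prefix (rev s).
exists (rev r2), (rev r1); split; first by rewrite -rev_cat -srev revK.
  by rewrite all_rev.
by move=> s' y /(congr1 rev); rewrite revK rev_rcons => /stop2.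
Qed.

End SeqSplit.

Lemma ord3_cases (i : 'I_3) : [\/ i = 0%R, i = 1%R | i = 2%R].
Proof.
case: i => [[|[|[|//]]] ?]; [apply: Or31|apply: Or32|apply: Or33];
  exact: val_inj.
Qed.

Lemma ord3_other2 (i j : 'I_3) : exists k : 'I_3, k != i /\ k != j.
Proof.
have [k] : exists k, k \in [predC [:: i; j]].
  apply/card_gt0P; rewrite -(ltn_add2l #|[:: i; j]|) addn0 cardC card_ord.
  exact: leq_ltn_trans (card_size _) _.
by rewrite !inE negb_or => /andP[]; exists k.
Qed.

Lemma ord3_pair (i j m l : 'I_3) :
  i != m -> j != m -> i != j -> l != m -> l = i \/ l = j.
Proof.
by case: (ord3_cases i) (ord3_cases j) (ord3_cases m) (ord3_cases l)
  => [->|->|->] [->|->|->] [->|->|->] [->|->|->]; auto.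
Qed.

Lemma ord2_neq (a b : 'I_2) : a != b -> (b == ord0) = (a != ord0).
Proof. by case: a b => [[|[|//]] ?] [[|[|//]] ?]. Qed.

Section AlternatingWords.
Variables (T : Type) (A B C : set (T * T)).
Hypotheses (eqA : Defs.equivalence_rel A) (eqB : Defs.equivalence_rel B).
Hypotheses (CA : C `<=` A) (CB : C `<=` B).

(* [alt_word y ms e] is a path y -B- z1 -A- u1 -B- z2 ... -A- um -B- e with
   A-moves in A \ C and no B-link between two A-moves in C; the moves are
   listed last first, ms = [:: (zm, um); ...; (z1, u1)]. *)
Fixpoint alt_word (y : T) (ms : seq (T * T)) (e : T) : Prop :=
  match ms with
  | [::] => B (y, e)
  | (z, u) :: ms' => [/\ alt_word y ms' z, (A `\` C) (z, u), B (u, e) &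
      if ms' is (_, u') :: _ then ~ C (u', z) else True]
  end.

Lemma alt_word_B y ms e v : alt_word y ms e -> B (e, v) -> alt_word y ms v.
Proof.
case: ms => [|[z u] ms] /=; first exact: equiv_trans eqB.
by case=> w Azu Bue link Bev; split=> //; apply: equiv_trans eqB Bue Bev.
Qed.

Lemma alt_word_A y ms e v : alt_word y ms e -> A (e, v) -> ~ B (e, v) ->
  exists ms', alt_word y ms' v.
Proof.
have nBC p : ~ B p -> ~ C p by move=> nBp /CB.
have Bvv := equiv_refl eqB v.
case: ms => [|[z u] ms] /= w Aev nBev.
  by exists [:: (e, v)]; do !split=> //; apply: nBC.
case: w => w [Azu nCzu] Bue link.
have [Cue|nCue] := pselect (C (u, e)); last first.
  by exists [:: (e, v), (z, u) & ms]; do !split=> //; apply: nBC.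
have Azv : A (z, v) := equiv_trans eqA (equiv_trans eqA Azu (CA Cue)) Aev.
have [Bzv|nBzv] := pselect (B (z, v)).
  by exists ms; apply: alt_word_B w Bzv.
by exists ((z, v) :: ms); do !split=> //; apply: nBC.
Qed.

Lemma join2_alt_word y y' : join2 A B (y, y') -> exists ms, alt_word y ms y'.
Proof.
move=> AB; elim: (gen_eq_rstn1 AB) => [|z z' step _ [ms w]].
  by exists [::]; apply: equiv_refl.
have [Bzz'|nBzz'] := pselect (B (z, z')).
  by exists ms; apply: alt_word_B w Bzz'.
have Azz' : A (z, z').
  by case: step => [[|]|[/(equiv_sym eqA)|/(equiv_sym eqB)]].
exact: alt_word_A w Azz' nBzz'.
Qed.

Lemma reduced_alt_word n x :
  reduced (fun a : 'I_2 => if a == ord0 then A else B) C n x -> 2 < n ->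
  exists z u ms, alt_word (x 0) ((z, u) :: ms) (x n.-1).
Proof.
case=> _ [a [step alt noC _]] n_gt2; have {}noC := noC n_gt2.
suff inv k : k.+1 < n -> exists ms, alt_word (x 0) ms (x k.+1) /\
    if ms is (_, u) :: _ then u = x (if a k == ord0 then k.+1 else k)
    else k = 0 /\ a 0 != ord0.
  have [|[|[z u] ms] [w last_u]] := inv n.-2; [lia| |].
    by case: last_u; lia.
  by exists z, u, ms; have <- : n.-2.+1 = n.-1 by lia.
elim: k => [|k IH] lt_kn.
  have := step 0 lt_kn; case: ifP => a0 s0.
    exists [:: (x 0, x 1)]; do !split=> //; try exact: equiv_refl.
    exact: noC 0 lt_kn.
  by exists [::].
have [ms [w last_u]] := IH (ltnW lt_kn).
have := step k.+1 lt_kn; rewrite (ord2_neq (alt k lt_kn)).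
case ak: (a k == ord0) last_u => /= last_u s1.
  case: ms w last_u => [_ [k0 a0]|[z u] ms w u_eq].
    by subst k; rewrite ak in a0.
  by exists ((z, u) :: ms); split; first apply: alt_word_B w s1.
exists ((x k.+1, x k.+2) :: ms); split=> //; split=> //.
- by split=> //; apply: noC.
- exact: equiv_refl.
- by case: ms w last_u => [|[z u] ms] // _ ->; apply: noC; lia.
Qed.

End AlternatingWords.

Section Triangle.
Variables (T : Type) (E : 'I_3 -> set (T * T)).
Hypothesis eqE : forall i, Defs.equivalence_rel (E i).
Implicit Types (i j l : 'I_3) (p : T * T) (c u x y z : T).

Definition Rij_union := [set p : T * T | exists i j, i != j /\ Rij E i j p].

Lemma Rij_equivalence i j : Defs.equivalence_rel (Rij E i j).
Proof. exact: equivalenceI (eqE i) (eqE j). Qed.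

Lemma R0_equivalence : Defs.equivalence_rel (R0 E).
Proof. exact: equivalenceI (equivalenceI (eqE _) (eqE _)) (eqE _). Qed.

Lemma R0_sub_Rij i j : R0 E `<=` Rij E i j.
Proof.
move=> p [[E0p E1p] E2p]; have Ep l : E l p by case: (ord3_cases l) => ->.
by split; apply: Ep.
Qed.

Lemma Rij_swap i j : Rij E i j `<=` Rij E j i.
Proof. by move=> p []. Qed.

Lemma Rij_sub_Ri l j : j != l -> Rij E l j `<=` Ri E l.
Proof. by move=> jl p Rp; apply: sub_gen_eq; exists j. Qed.

Lemma R0_sub_Ri l : R0 E `<=` Ri E l.
Proof.
have [j [jl _]] := ord3_other2 l l.
by move=> p /(R0_sub_Rij l j); apply: Rij_sub_Ri.
Qed.

Lemma R0_sub_Rij_union : R0 E `<=` Rij_union.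
Proof.
have [j [j0 _]] := ord3_other2 0%R 0%R.
by move=> p /(R0_sub_Rij 0%R j) Rp; exists 0%R, j; rewrite eq_sym.
Qed.

Lemma Ri_sub_E l : Ri E l `<=` E l.
Proof. by apply: gen_eq_min => // p [j [_ []]]. Qed.

Lemma Ri_sub_Rall l : Ri E l `<=` Rall E.
Proof.
apply: gen_eq_sub_gen => p [j [jl Rp]].
by apply: sub_gen_eq; exists l, j; rewrite eq_sym.
Qed.

Lemma Rall_sub_joinI : Rall E `<=` joinI E.
Proof.
by apply: gen_eq_sub_gen => p [i [j [_ [Ep _]]]]; apply: sub_gen_eq; exists i.
Qed.

Lemma joinI_join2_Rall : joinI E = joinI (fun i => join2 (E i) (Rall E)).
Proof.
apply/seteqP; split; apply: gen_eq_sub_gen => p [i Ep].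
  by apply: sub_gen_eq; exists i; apply: sub_gen_eq; left.
apply: gen_eq_sub_gen Ep => q [Eq|/Rall_sub_joinI //].
by apply: sub_gen_eq; exists i.
Qed.

Lemma Rij_other_pair (m : 'I_3) i j i' j' p : i != m -> j != m -> i != j ->
  i' != m -> j' != m -> i' != j' -> Rij E i j p -> Rij E i' j' p.
Proof.
move=> im jm ij i'm j'm.
by case: (ord3_pair im jm ij i'm) (ord3_pair im jm ij j'm) => [->|->] [->|->];
  rewrite ?eqxx // => _ /Rij_swap.
Qed.

Lemma typrel_TR_sub_Ri (k : 'I_3) l : k != l -> typrel E (TR k) `<=` Ri E l.
Proof.
move=> kl p [i [j [ik jk ij [Rp _]]]].
have lk : l != k by rewrite eq_sym.
have [->|->] := ord3_pair ik jk ij lk.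
  by apply: Rij_sub_Ri Rp; rewrite eq_sym.
exact: Rij_sub_Ri ij _ (Rij_swap Rp).
Qed.

Lemma typrel_TR_of_Rij i j p : i != j -> Rij E i j p -> ~ R0 E p ->
  exists k, [/\ k != i, k != j & typrel E (TR k) p].
Proof.
move=> ij Rp nR0p; have [k [ki kj]] := ord3_other2 i j.
by exists k; split=> //; exists i, j; split; rewrite // eq_sym.
Qed.

Lemma Ri_Eo_trans l x y z : Ri E l (x, y) -> Eo E l (y, z) -> Eo E l (x, z).
Proof.
move=> Rxy [Eyz nRyz]; split.
  exact: equiv_trans (eqE l) (Ri_sub_E Rxy) Eyz.
by move=> Rxz; apply: nRyz (gen_eq_trans (gen_eq_sym Rxy) Rxz).
Qed.

Lemma Eo_Ri_trans l x y z : Eo E l (x, y) -> Ri E l (y, z) -> Eo E l (x, z).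
Proof.
move=> [Exy nRxy] Ryz; split.
  exact: equiv_trans (eqE l) Exy (Ri_sub_E Ryz).
by move=> Rxz; apply: nRxy (gen_eq_trans Rxz (gen_eq_sym Ryz)).
Qed.

Lemma Eo_irrefl l x : ~ Eo E l (x, x).
Proof. by case=> _; apply; apply: gen_eq_refl. Qed.

Definition compat2 (t t' : ttype) := compat t t' /\ compat t' t.

Definition follows (L : option ttype) (t : ttype) :=
  if L is Some t0 then compat2 t0 t else True.

(* A sequence x, y_1, ..., y_n with step types t_1, ..., t_n is stored as
   x and s = [:: (t_1, y_1); ...; (t_n, y_n)]; when L = Some t_0, the first
   type must moreover be compatible with t_0. *)
Fixpoint tri_chain x (L : option ttype) (s : seq (ttype * T)) : Prop :=
  if s is (t, y) :: s' then
    [/\ typrel E t (x, y), follows L t & tri_chain y (Some t) s']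
  else True.

Definition chain_end x (s : seq (ttype * T)) := last x (map snd s).

Definition last_type (L : option ttype) (s : seq (ttype * T)) :=
  last L (map (Some \o fst) s).

Lemma compat2_TE_TR l : compat2 (TE l) (TR l).
Proof. by split; [right|left]. Qed.

Lemma compat2_TR_TE l : compat2 (TR l) (TE l).
Proof. by split; [left|right]. Qed.

Lemma compat2_TE_TE l l' : l != l' -> compat2 (TE l) (TE l').
Proof. by move=> ll'; split; left; [exists l'|exists l]; rewrite // eq_sym. Qed.

Lemma compat2_TR_TR l l' : l != l' -> compat2 (TR l) (TR l').
Proof.
by move=> ll'; split; right; [exists l'|exists l]; rewrite // eq_sym.
Qed.

Lemma chain_end_cat x s1 s2 :
  chain_end x (s1 ++ s2) = chain_end (chain_end x s1) s2.
Proof. by rewrite /chain_end map_cat last_cat. Qed.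

Lemma last_type_cat L s1 s2 :
  last_type L (s1 ++ s2) = last_type (last_type L s1) s2.
Proof. by rewrite /last_type map_cat last_cat. Qed.

Lemma chain_end_rcons x s t y : chain_end x (rcons s (t, y)) = y.
Proof. by rewrite /chain_end map_rcons last_rcons. Qed.

Lemma last_type_rcons L s t y : last_type L (rcons s (t, y)) = Some t.
Proof. by rewrite /last_type map_rcons last_rcons. Qed.

Lemma tri_chain_cat x L s1 s2 : tri_chain x L (s1 ++ s2) <->
  tri_chain x L s1 /\ tri_chain (chain_end x s1) (last_type L s1) s2.
Proof.
elim: s1 x L => [|[t y] s1 IH] x L /=; first by intuition.
split=> [[typ fol /IH[ch1 ch2]] | [[typ fol ch1] ch2]]; first by [].
by split=> //; apply/IH.
Qed.

Lemma tri_chain_rcons x L s t y : tri_chain x L (rcons s (t, y)) <->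
  [/\ tri_chain x L s, typrel E t (chain_end x s, y) &
      follows (last_type L s) t].
Proof.
rewrite -cats1 tri_chain_cat /=.
by split=> [[ch [typ fol _]]|[ch typ fol]].
Qed.

Lemma tri_chain_prev x L L' s : tri_chain x L s ->
  (forall t y s', s = (t, y) :: s' -> follows L' t) -> tri_chain x L' s.
Proof. by case: s => [|[t y] s] //= [typ _ ch] /(_ t y s erefl). Qed.

Definition isTE (t : ttype) := if t is TE _ then true else false.
Definition isTR (t : ttype) := if t is TR _ then true else false.

(* A step of type TR k with k <> l lies in R_l, so an adjacent E_l°-step
   absorbs it. *)
Definition absorbable l (t : ttype) := if t is TR k then k != l else false.

Lemma isTR_absorbable l t : isTR t -> ~~ absorbable l t -> t = TR l.
Proof. by case: t => // k _ /negPn /eqP ->. Qed.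

Definition tr_chain L x s z :=
  [/\ tri_chain x L s, all (isTR \o fst) s & chain_end x s = z].

Definition tr_conn x z := R0 E (x, z) \/ exists s, tr_chain None x s z.

Lemma Rij_union_tr_conn x z : Rij_union (x, z) -> tr_conn x z.
Proof.
move=> [i [j [ij Rp]]].
have [R0p|nR0p] := pselect (R0 E (x, z)); first by left.
have [k [_ _ TRp]] := typrel_TR_of_Rij ij Rp nR0p.
by right; exists [:: (TR k, z)].
Qed.

(* A new R_ij-step is merged into a last step of the same pair {i, j}, which
   is dropped if the merge lands in R_0; otherwise its type differs. *)
Lemma tr_conn_Rij_union x y z : tr_conn x y -> Rij_union (y, z) -> tr_conn x z.
Proof.
case=> [R0xy [i [j [ij Ryz]]]|[s]].
  apply: Rij_union_tr_conn; exists i, j; split=> //.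
  exact: equiv_trans (Rij_equivalence i j) (R0_sub_Rij i j R0xy) Ryz.
elim/last_ind: s y z => [|s [t y'] IH] y z [ch TRs end_y] Ryz.
  by rewrite -end_y in Ryz; apply: Rij_union_tr_conn.
move: ch TRs end_y; rewrite tri_chain_rcons all_rcons chain_end_rcons.
case: t => // m [ch [i [j [im jm ij [Ry'y nR0]]]] fol] /= TRs y'y.
subst y'; set y' := chain_end x s in Ry'y nR0.
have [Ryz'|nRyz'] := pselect (Rij E i j (y, z)).
  have Ry'z := equiv_trans (Rij_equivalence i j) Ry'y Ryz'.
  have [R0y'z|nR0y'z] := pselect (R0 E (y', z)).
    exact: IH y' z (And3 ch TRs erefl) (R0_sub_Rij_union R0y'z).
  right; exists (rcons s (TR m, z)); split.
  - by apply/tri_chain_rcons; split=> //; exists i, j.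
  - by rewrite all_rcons TRs.
  - exact: chain_end_rcons.
have [i' [j' [ij' Ryz']]] := Ryz.
have nR0yz : ~ R0 E (y, z) by move/(R0_sub_Rij i j).
have [k [ki kj TRyz]] := typrel_TR_of_Rij ij' Ryz' nR0yz.
have mk : m != k.
  apply: contra_notN nRyz' => /eqP mk; subst k.
  by apply: (Rij_other_pair _ _ ij' im jm ij Ryz'); rewrite eq_sym.
right; exists (rcons (rcons s (TR m, y)) (TR k, z)); split.
- apply/tri_chain_rcons; rewrite chain_end_rcons last_type_rcons.
  split; last exact: compat2_TR_TR.
    by apply/tri_chain_rcons; split=> //; exists i, j.
  exact: TRyz.
- by rewrite !all_rcons TRs.
- exact: chain_end_rcons.
Qed.

Lemma Rall_tr_conn x z : Rall E (x, z) -> tr_conn x z.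
Proof.
move=> Rxz; elim: (gen_eq_rstn1 Rxz) => [|y z' step _ conn].
  by left; apply: equiv_refl R0_equivalence _.
apply: tr_conn_Rij_union conn _.
case: step => // -[i [j [ij /(equiv_sym (Rij_equivalence i j)) Rp]]].
by exists i, j.
Qed.

Lemma absorbable_Ri l x L s : tri_chain x L s ->
  all (absorbable l \o fst) s -> Ri E l (x, chain_end x s).
Proof.
elim: s x L => [|[t y] s IH] x L /=; first by move=> _ _; apply: gen_eq_refl.
case=> typ _ ch /andP[abs_t abs_s]; apply: gen_eq_trans (IH _ _ ch abs_s).
by case: t typ abs_t {ch} => // k typ kl; apply: typrel_TR_sub_Ri kl _ typ.
Qed.

Lemma tr_chain_absorb_head l x s z : tr_chain None x s z ->
  exists c s', Ri E l (x, c) /\ tr_chain (Some (TE l)) c s' z.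
Proof.
case=> ch TRs end_z.
have [s1 [s2 [s12 abs1 stop2]]] := split_all_prefix (absorbable l \o fst) s.
move: ch TRs end_z; rewrite s12 tri_chain_cat all_cat chain_end_cat.
move=> [ch1 ch2] /andP[_ TRs2] end_z.
exists (chain_end x s1), s2; split; first exact: absorbable_Ri ch1 abs1.
split=> //; apply: tri_chain_prev ch2 _ => t y s' s2E.
move: TRs2 (stop2 _ _ s2E); rewrite s2E /= => /andP[TRt _] nabs.
rewrite (isTR_absorbable TRt nabs); exact: compat2_TE_TR.
Qed.

Lemma tr_chain_absorb_tail l L x s z : tr_chain L x s z ->
  exists s' c, [/\ tr_chain L x s' c, Ri E l (c, z) &
                   s' = [::] \/ last_type L s' = Some (TR l)].
Proof.
case=> ch TRs end_z.
have [s1 [s2 [s12 abs2 stop1]]] := split_all_suffix (absorbable l \o fst) s.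
move: ch TRs end_z; rewrite s12 tri_chain_cat all_cat chain_end_cat.
move=> [ch1 ch2] /andP[TRs1 _] end_z.
exists s1, (chain_end x s1); split=> //.
  by rewrite -end_z; exact: absorbable_Ri ch2 abs2.
case/lastP: s1 {s12 ch1 ch2 end_z} TRs1 stop1 => [|s1 [t y]]; [by left|right].
move: TRs1 (stop1 _ _ erefl); rewrite all_rcons last_type_rcons.
by move=> /andP[TRt _] nabs; congr Some; exact: isTR_absorbable TRt nabs.
Qed.

Lemma Rall_split_left l x z : Rall E (x, z) ->
  exists c s, Ri E l (x, c) /\ tr_chain (Some (TE l)) c s z.
Proof.
case/Rall_tr_conn => [R0xz|[s ch]]; last exact: tr_chain_absorb_head ch.
by exists z, [::]; split; [apply: R0_sub_Ri|].
Qed.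

Lemma Rall_split_right l x z : Rall E (x, z) -> exists s c,
  [/\ tr_chain None x s c, Ri E l (c, z) & follows (last_type None s) (TE l)].
Proof.
case/Rall_tr_conn => [R0xz|[s ch]].
  by exists [::], x; split; [|apply: R0_sub_Ri|].
have [s' [c [ch' Rcz end_s']]] := tr_chain_absorb_tail l ch.
by exists s', c; split=> //; case: end_s' => ->; last exact: compat2_TR_TE.
Qed.

Lemma Rall_split l l' x z : Rall E (x, z) -> l != l' \/ ~ Ri E l (x, z) ->
  exists c s c', [/\ Ri E l (x, c), tr_chain (Some (TE l)) c s c',
    Ri E l' (c', z) & follows (last_type (Some (TE l)) s) (TE l')].
Proof.
move=> Rxz sep; have [c [s [Rxc ch]]] := Rall_split_left l Rxz.
have [s' [c' [ch' Rc'z [s'0|last_s']]]] := tr_chain_absorb_tail l' ch;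
  last by exists c, s', c'; split=> //; rewrite last_s'; apply: compat2_TR_TE.
exists c, s', c'; split=> //; rewrite s'0; apply: compat2_TE_TE.
apply/negP => /eqP ll'; subst l'.
case: ch' => _ _; rewrite s'0 => /= cc'; subst c'.
by case: sep => [|]; [rewrite eqxx|apply; apply: gen_eq_trans Rxc Rc'z].
Qed.

Section OpenChain.
Variable x0 : T.

(* A triangle-reduced chain from [x0] followed by an E_l°-step to [u] that is
   not yet committed, because R_l-steps after it may still be absorbed, and
   then by an R-step to [z]. *)
Definition open_chain s l u z :=
  [/\ tri_chain x0 None s, Eo E l (chain_end x0 s, u),
      follows (last_type None s) (TE l) & Rall E (u, z)].

Lemma open_chain_start l y u : Rall E (x0, y) -> Eo E l (y, u) ->
  exists s, open_chain s l u u.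
Proof.
move=> Rx0y Eyu.
have [s [c [[ch _ end_c] Rcy fol]]] := Rall_split_right l Rx0y.
exists s; split=> //; last exact: gen_eq_refl.
by rewrite end_c; apply: Ri_Eo_trans Rcy Eyu.
Qed.

Lemma open_chain_Rall s l u z z' :
  open_chain s l u z -> Rall E (z, z') -> open_chain s l u z'.
Proof.
by case=> ch Ewu fol Ruz Rzz'; split=> //; apply: gen_eq_trans Ruz Rzz'.
Qed.

Lemma open_chain_Eo s l u z l' u' : open_chain s l u z -> Eo E l' (z, u') ->
  l != l' \/ ~ Ri E l (u, z) -> exists s', open_chain s' l' u' u'.
Proof.
case=> ch Ewu fol Ruz Ezu' sep.
have [c [mid [c' [Ruc [ch' _ <-] Rc'z fol']]]] := Rall_split Ruz sep.
exists (s ++ (TE l, c) :: mid); split; last exact: gen_eq_refl.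
- by apply/tri_chain_cat; split=> //; split=> //; apply: Eo_Ri_trans Ewu Ruc.
- by rewrite chain_end_cat; apply: Ri_Eo_trans Rc'z Ezu'.
- by rewrite last_type_cat.
Qed.

Lemma open_chain_close s l u z : open_chain s l u z ->
  exists s',
    [/\ tri_chain x0 None s', chain_end x0 s' = z & has (isTE \o fst) s'].
Proof.
case=> ch Ewu fol Ruz.
have [c [mid [Ruc [ch' _ end_z]]]] := Rall_split_left l Ruz.
exists (s ++ (TE l, c) :: mid); split.
- by apply/tri_chain_cat; split=> //; split=> //; apply: Eo_Ri_trans Ewu Ruc.
- by rewrite chain_end_cat; exact: end_z.
- by rewrite has_cat /= orbT.
Qed.

Definition ready y a :=
  Rall E (x0, y) \/ exists s l u, open_chain s l u y /\ l != a.

Lemma ready_start a : ready x0 a.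
Proof. by left; apply: gen_eq_refl. Qed.

Lemma open_chain_alt_word a y z u ms e :
  alt_word (E a) (Rall E) (Ri E a) y ((z, u) :: ms) e -> ready y a ->
  exists s, open_chain s a u e.
Proof.
elim: ms z u e => [|[z' u'] ms IH] z u e /= [w Ezu Rue link] rdy.
  case: rdy => [Rx0y|[s [l [u0 [oc la]]]]].
    have [s oc] := open_chain_start (gen_eq_trans Rx0y w) Ezu.
    by exists s; apply: open_chain_Rall oc Rue.
  have [s' oc'] := open_chain_Eo (open_chain_Rall oc w) Ezu (or_introl la).
  by exists s'; apply: open_chain_Rall oc' Rue.
have [s oc] := IH z' u' z w rdy.
have [s' oc'] := open_chain_Eo oc Ezu (or_intror link).
by exists s'; apply: open_chain_Rall oc' Rue.
Qed.

End OpenChain.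

Lemma tri_chain_nth_typrel x L s d dt k : tri_chain x L s -> k < size s ->
  typrel E (nth dt (map fst s) k)
    (nth d (x :: map snd s) k, nth d (x :: map snd s) k.+1).
Proof.
elim: s x L k => [|[t y] s IH] x L [|k] // [typ _ ch] lt_ks //.
exact: IH y (Some t) k ch lt_ks.
Qed.

Lemma tri_chain_nth_compat x L s dt k : tri_chain x L s -> k.+1 < size s ->
  compat2 (nth dt (map fst s) k) (nth dt (map fst s) k.+1).
Proof.
elim: s x L k => [|[t y] s IH] x L [|k] // [_ _ ch] lt_ks.
  by case: s ch lt_ks {IH} => [|[t' y'] s] // [].
exact: IH y (Some t) k ch lt_ks.
Qed.

Lemma tri_chain_reduced x L s d dt : tri_chain x L s -> 0 < size s ->
  tri_reduced E (size s).+1 (nth d (x :: map snd s)) (nth dt (map fst s)).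
Proof.
move=> ch s_gt0; split=> // k lt_ks.
  exact: tri_chain_nth_typrel ch _.
exact: tri_chain_nth_compat ch _.
Qed.

Lemma proper_I_of_compat l t' n tt : compat (TE l) t' ->
  has_type n tt (TE l) -> has_type n tt t' -> proper_I n tt.
Proof.
case=> [[i [il ->]]|->] hasl hast; last by left; exists l.
by right; exists l, i; rewrite eq_sym.
Qed.

Lemma tri_chain_proper_I x L s dt : tri_chain x L s -> 1 < size s ->
  has (isTE \o fst) s -> proper_I (size s).+1 (nth dt (map fst s)).
Proof.
move=> ch s_gt1 /(has_nthP (dt, x))[k lt_ks]; rewrite /= -(nth_map _ dt) //.
case tk: (nth dt (map fst s) k) => [l|//] _.
have has_k : has_type (size s).+1 (nth dt (map fst s)) (TE l) by exists k.
have [lt_k1s|ge_k1s] := ltnP k.+1 (size s).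
  have [+ _] := tri_chain_nth_compat dt ch lt_k1s; rewrite tk => comp.
  by apply: proper_I_of_compat comp has_k _; exists k.+1.
have lt_k1 : (k.-1).+1 < size s by lia.
have [_] := tri_chain_nth_compat dt ch lt_k1.
rewrite prednK ?tk => [comp|]; last by lia.
by apply: proper_I_of_compat comp has_k _; exists k.-1; split=> //; lia.
Qed.

Definition proper_I_separating (N : set T) :=
  forall n (x : nat -> T) (t : nat -> ttype), ~ N (x 0) ->
  tri_reduced E n x t -> proper_I n t -> x 0 <> x n.-1.

Lemma nth_chain_end x s : nth x (x :: map snd s) (size s) = chain_end x s.
Proof.
by rewrite -(size_map snd) -[size _]/((size (x :: map snd s)).-1) nth_last.
Qed.

Lemma tri_chain_TE_ends_neq N x s : proper_I_separating N -> ~ N x ->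
  tri_chain x None s -> has (isTE \o fst) s -> x <> chain_end x s.
Proof.
move=> sepN Nx ch hasTE; have [s_gt1|] := ltnP 1 (size s).
  have red := tri_chain_reduced x (TE 0%R) ch (ltnW s_gt1).
  move: (sepN _ _ _ Nx red (tri_chain_proper_I (TE 0%R) ch s_gt1 hasTE)).
  by rewrite -nth_chain_end.
case: s ch hasTE => [|[t y] [|//]] //= + + _.
by case: t => // l [Exy _ _] _ xy; apply: (@Eo_irrefl l x); rewrite {2}xy.
Qed.

Section Freeness.
Variable N : set T.
Hypothesis sepN : proper_I_separating N.

Lemma reduced_Ei_Rall_ends_neq i n (x : nat -> T) : ~ N (x 0) ->
  reduced (fun a : 'I_2 => if a == ord0 then E i else Rall E) (Ri E i) n x ->
  x 0 <> x n.-1.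
Proof.
move=> Nx red; have [n_ge2 [_ [_ _ _ n2]]] := red.
case: (ltngtP n 2) => [|n_gt2|n_eq2]; [lia| |by rewrite n_eq2; apply: n2].
have [z [u [ms w]]] := reduced_alt_word (gen_eq_equivalence _) red n_gt2.
have [s oc] := open_chain_alt_word w (ready_start _ _).
have [s' [ch <- hasTE]] := open_chain_close oc.
exact: tri_chain_TE_ends_neq sepN Nx ch hasTE.
Qed.

Lemma reduced_joins_ends_neq n (x : nat -> T) : ~ N (x 0) ->
  reduced (fun i : 'I_3 => join2 (E i) (Rall E)) (Rall E) n x -> x 0 <> x n.-1.
Proof.
move=> Nx [n_ge2 [a [step alt noR n2]]].
case: (ltngtP n 2) => [|n_gt2|n_eq2]; [lia| |by rewrite n_eq2; apply: n2].
have {}noR := noR n_gt2.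
have block k : k.+1 < n -> ready (x 0) (x k) (a k) ->
    exists s u, open_chain (x 0) s (a k) u (x k.+1).
  move=> lt_kn rdy.
  have [[|[z u] ms] w] := join2_alt_word (eqE (a k)) (gen_eq_equivalence _)
    (@Ri_sub_E (a k)) (@Ri_sub_Rall (a k)) (step k lt_kn).
    by case: (noR k lt_kn).
  by have [s oc] := open_chain_alt_word w rdy; exists s, u.
have [s [u oc]] : exists s u, open_chain (x 0) s (a n.-2) u (x n.-2.+1).
  have : n.-2.+1 < n by lia.
  elim: n.-2 => [|k IH] lt_kn; apply: (block _ lt_kn).
    exact: ready_start.
  have [s [u oc]] := IH (ltnW lt_kn).
  by right; exists s, (a k), u; split=> //; apply: alt.
have [s' [ch end_s' hasTE]] := open_chain_close oc.
have -> : n.-1 = n.-2.+1 by lia.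
by rewrite -end_s'; apply: tri_chain_TE_ends_neq sepN Nx ch hasTE.
Qed.

End Freeness.
End Triangle.

Unset Implicit Arguments.

Theorem theorem4p3 (d : measure_display) (T : measurableType d) (R : realType)
  (mu : probability T R) (E : 'I_3 -> set (T * T)) :
  standard_borel T R -> nonatomic mu -> (forall i, SP1 mu (E i)) ->
  triangle_join mu E ->
  (forall i : 'I_3,
     free_amalg mu (fun a : 'I_2 => if a == ord0 then E i else Rall E) (Ri E i))
  /\ joinI E = joinI (fun i : 'I_3 => join2 (E i) (Rall E))
  /\ free_amalg mu (fun i : 'I_3 => join2 (E i) (Rall E)) (Rall E).
Proof.
move=> _ _ SPE [[N [measN muN sepN]] _].
have eqE i : Defs.equivalence_rel (E i) by case: (SPE i).
split; [|split].
- move=> i; split.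
    by move=> a; case: ifP => _; [apply: Ri_sub_E | apply: Ri_sub_Rall].
  by exists N; split=> // n x; apply: reduced_Ei_Rall_ends_neq.
- exact: joinI_join2_Rall.
- split; first by move=> i p Rp; apply: sub_gen_eq; right.
  by exists N; split=> // n x; apply: reduced_joins_ends_neq.
Qed.
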